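(* Let $\alpha>0$, $\lambda\in\mathbb C$, and $\gamma=1/\sqrt{1+\alpha}$. The equation $$(\lambda^2+\lambda)\varphi+\Big((2\lambda+2)y+\frac{2\alpha}{\sqrt{1+\alpha}+y}\Big)\varphi'+(y^2-1)\varphi''=0 \tag{E1}$$ has a nontrivial solution $\varphi\in C^\infty[-1,1]$ if and only if the equation $$(\lambda^2-\lambda)\psi+\big(2\lambda y'+2\sqrt{1+\alpha}\big)\psi'+(y'^2-1)\psi''=0 \tag{E2}$$ has a nontrivial solution $\psi\in C^\infty[-1,1]$. Moreover, solutions correspond via $$\psi(y')=\Big(\frac{1-\gamma y'}{\sqrt{1-\gamma^2}}\Big)^{-\lambda}\varphi\Big(\frac{y'-\gamma}{1-\gamma y'}\Big).$$
   Context: (E1) is the eigenvalue equation of the linearization at the blow-up profile $U_{\alpha,\infty,\kappa}(s,y)=\alpha s-\alpha\log(\sqrt{1+\alpha}+y)+\kappa$ of the self-similar form of $u_{tt}-u_{xx}=(u_x)^2$; (E2) is the eigenvalue equation of the linearization at its Lorentz transform, which is independent of $y'$. *)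

From Stdlib Require Import Reals.
From Coquelicot Require Import Coquelicot.

Open Scope R_scope.

Definition I11 (y : R) : Prop := -1 <= y <= 1.

(** Principal complex power [x ^ z] of a positive real [x]:
    [x ^ z = exp (z * ln x)], written out via Euler's formula. *)
Definition rcpow (x : R) (z : C) : C :=
  (RtoC (exp (Re z * ln x)) *
   (RtoC (cos (Im z * ln x)) + Ci * RtoC (sin (Im z * ln x))))%C.

(** [l] is the derivative of [f : R -> C] at [x] relative to the interval
    [-1,1] (one-sided at the endpoints):
    (f (x+h) - f x)/h --> l as h -> 0, h <> 0, x+h in [-1,1]. *)
Definition is_deriv_I11 (f : R -> C) (x : R) (l : C) : Prop :=
  filterlim (fun h : R => ((f (Rplus x h) - f x) / RtoC h)%C)
    (within (fun h : R => h <> 0 /\ I11 (x + h)) (locally 0))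
    (locally l).

(** [D] is a tower of derivatives of [f] on [-1,1]: [D 0 = f] on [-1,1] and
    [D (S n)] is the derivative of [D n] on [-1,1].  Existence of such a
    [D] means [f ∈ C^∞[-1,1]]. *)
Definition deriv_tower (f : R -> C) (D : nat -> R -> C) : Prop :=
  (forall y, I11 y -> D O y = f y) /\
  (forall n y, I11 y -> is_deriv_I11 (D n) y (D (S n) y)).

Definition smooth_I11 (f : R -> C) : Prop := exists D, deriv_tower f D.

Definition nontrivial_I11 (f : R -> C) : Prop := exists y, I11 y /\ f y <> RtoC 0.

Definition solves_E1 (alpha : R) (lam : C) (phi : R -> C) : Prop :=
  exists D, deriv_tower phi D /\
  forall y, I11 y ->
    ((lam * lam + lam) * D O y
     + (RtoC 2 * lam + RtoC 2) * RtoC y * D 1%nat y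
     + RtoC (2 * alpha / (sqrt (1 + alpha) + y)) * D 1%nat y
     + RtoC (y * y - 1) * D 2%nat y)%C = RtoC 0.

Definition solves_E2 (alpha : R) (lam : C) (psi : R -> C) : Prop :=
  exists D, deriv_tower psi D /\
  forall y', I11 y' ->
    ((lam * lam - lam) * D O y'
     + (RtoC 2 * lam * RtoC y' + RtoC (2 * sqrt (1 + alpha))) * D 1%nat y'
     + RtoC (y' * y' - 1) * D 2%nat y')%C = RtoC 0.

Definition gam (alpha : R) : R := 1 / sqrt (1 + alpha).

Definition transf (alpha : R) (lam : C) (phi : R -> C) (y' : R) : C :=
  let g := gam alpha in
  (rcpow ((1 - g * y') / sqrt (1 - g * g)) (- lam)
   * phi ((y' - g) / (1 - g * y'))%R)%C.

(* Write [a = sqrt (1 + alpha)], so that [(1 - gam y) / sqrt (1 - gam^2) = (a - y) / sqrt alpha]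
   and [(y - gam) / (1 - gam y) = T y] with [T y = (a y - 1) / (a - y)].  [T] is a smooth
   bijection of [-1,1] onto itself with inverse [y |-> (a y + 1) / (a + y)], and
   [transf phi = w * (phi o T)] for the nowhere vanishing weight
   [w y = ((a - y) / sqrt alpha)^(-lam)].
   Since [w' = lam w / (a - y)] and [T' = alpha / (a - y)^2], a direct computation gives
   [E2 (w * (phi o T)) = w T' ((E1 phi) o T)], so [phi] solves (E1) iff [transf phi] solves (E2).
   Smoothness of [transf phi], and of the inverse transform, follows from closure of
   [C^oo[-1,1]] under sums, products and composition with smooth self-maps of [-1,1]. *)

From Stdlib Require Import Reals Lra Psatz ClassicalEpsilon.
From Coquelicot Require Import Coquelicot.
Open Scope R_scope.

(** * Derivatives relative to [-1,1] *)

Notation increments x := (within (fun h : R => h <> 0 /\ I11 (x + h)) (locally 0)).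

#[global] Instance increments_filter x : Filter (increments x).
Proof. apply within_filter, locally_filter. Qed.

Lemma ball_0_Rabs (e h : R) : ball 0 e h <-> Rabs h < e.
Proof.
  unfold ball; simpl; unfold AbsRing_ball, abs, minus, plus, opp; simpl.
  rewrite Ropp_0, Rplus_0_r. reflexivity.
Qed.

Lemma increments_proper x : I11 x -> ProperFilter' (increments x).
Proof.
  intros [Hx1 Hx2]. split; [|apply increments_filter].
  intros [[e He] Heps]; simpl in Heps.
  set (d := Rmin (e / 2) 1).
  assert (0 < d) by (apply Rmin_pos; lra).
  assert (d <= e / 2) by apply Rmin_l. assert (d <= 1) by apply Rmin_r.
  destruct (Rle_dec x 0).
  - apply (Heps d); [apply ball_0_Rabs; rewrite Rabs_pos_eq|split; [|split]]; lra.
  - apply (Heps (- d));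
      [apply ball_0_Rabs; rewrite Rabs_Ropp, Rabs_pos_eq|split; [|split]]; lra.
Qed.

Lemma filterlim_increments_C (g : R -> C) x l :
  (forall eps : posreal, exists delta : posreal, forall h, h <> 0 -> I11 (x + h) ->
     Rabs h < delta -> Cmod (g h - l) < eps) ->
  filterlim g (increments x) (locally l).
Proof.
  intros H P [eps HP]. destruct (H eps) as [d Hd]. exists d.
  intros h Hh [Hh0 Hxh]. apply HP, C_NormedModule_mixin_compat1, Hd; auto.
  apply ball_0_Rabs, Hh.
Qed.

Lemma filterlim_increments_RtoC (r : R -> R) x m :
  (forall eps : posreal, exists delta : posreal, forall h, h <> 0 -> Rabs h < delta ->
     Rabs (r h - m) < eps) ->
  filterlim (fun h => RtoC (r h)) (increments x) (locally (RtoC m)).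
Proof.
  intros H. apply filterlim_increments_C. intros eps. destruct (H eps) as [d Hd].
  exists d. intros h Hh _ Hd'. rewrite <- RtoC_minus, Cmod_R. auto.
Qed.

(* [C] carries two uniform structures: the product one ([C_UniformSpace]) and the
   one induced by [Cmod] (as an [AbsRing]); they have the same neighbourhoods. *)
Lemma locally_C_AbsRing (a : C) (P : C -> Prop) :
  @locally (AbsRing_UniformSpace C_AbsRing) a P <-> @locally C_UniformSpace a P.
Proof.
  split.
  - intros [[e He] H].
    assert (He2 : 0 < e / 2) by lra.
    exists (mkposreal _ He2). intros y Hy. apply H.
    pose proof (C_NormedModule_mixin_compat2 a y (mkposreal _ He2) Hy) as Hn.
    assert (sqrt 2 < 2).
    { rewrite <- (sqrt_square 2) at 2 by lra. apply sqrt_lt_1; lra. }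
    assert (0 <= sqrt 2) by apply sqrt_pos.
    change (Cmod (y - a)%C < e). change (Cmod (y - a)%C < sqrt 2 * (e / 2)) in Hn. nra.
  - intros [eps H]. exists eps. intros y Hy. apply H, C_NormedModule_mixin_compat1, Hy.
Qed.

Section Limits.
Context {T : Type} (F : (T -> Prop) -> Prop) {FF : Filter F}.

Lemma filterlim_Cplus (f g : T -> C) a b :
  filterlim f F (locally a) -> filterlim g F (locally b) ->
  filterlim (fun t => f t + g t)%C F (locally (a + b)%C).
Proof.
  intros Hf Hg. apply (filterlim_comp_2 (G := locally a) (H := locally b) f g Cplus); auto.
  exact (@filterlim_plus C_AbsRing C_NormedModule a b).
Qed.

Lemma filterlim_Cmult (f g : T -> C) a b :
  filterlim f F (locally a) -> filterlim g F (locally b) ->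
  filterlim (fun t => f t * g t)%C F (locally (a * b)%C).
Proof.
  intros Hf Hg P HP.
  apply (filterlim_comp_2 (G := @locally (AbsRing_UniformSpace C_AbsRing) a)
    (H := @locally (AbsRing_UniformSpace C_AbsRing) b)
    (I := @locally (AbsRing_UniformSpace C_AbsRing) (a * b)%C) f g Cmult).
  - intros Q HQ. apply Hf, locally_C_AbsRing, HQ.
  - intros Q HQ. apply Hg, locally_C_AbsRing, HQ.
  - exact (@filterlim_mult C_AbsRing a b).
  - apply locally_C_AbsRing, HP.
Qed.

End Limits.

Lemma RtoC_neq0 h : h <> 0 -> RtoC h <> 0%C.
Proof. intros H E. apply H. injection E; auto. Qed.

Lemma is_deriv_I11_unique f x l1 l2 :
  I11 x -> is_deriv_I11 f x l1 -> is_deriv_I11 f x l2 -> l1 = l2.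
Proof.
  intros Hx H1 H2.
  exact (@filterlim_locally_unique _ C_AbsRing C_NormedModule _ (increments_proper x Hx)
           _ _ _ H1 H2).
Qed.

Lemma is_deriv_I11_ext f g x l :
  (forall y, I11 y -> f y = g y) -> I11 x -> is_deriv_I11 f x l -> is_deriv_I11 g x l.
Proof.
  intros E Hx H. eapply filterlim_within_ext; [|exact H].
  intros h [_ Hh]. rewrite !E; auto.
Qed.

Lemma is_deriv_I11_RtoC (r : R -> R) x l :
  derivable_pt_lim r x l -> is_deriv_I11 (fun y => RtoC (r y)) x (RtoC l).
Proof.
  intros H. apply (filterlim_within_ext _ (fun h => RtoC ((r (x + h) - r x) / h))).
  - intros h [Hh _]. rewrite RtoC_div, RtoC_minus by auto. reflexivity.
  - apply filterlim_increments_RtoC. intros eps.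
    destruct (H eps (cond_pos eps)) as [d Hd]. exists d. auto.
Qed.

Lemma is_deriv_I11_continuous f x l :
  is_deriv_I11 f x l -> filterlim (fun h => f (x + h)) (increments x) (locally (f x)).
Proof.
  intros H.
  apply (filterlim_within_ext _
    (fun h => f x + RtoC h * ((f (x + h)%R - f x) / RtoC h))%C).
  - intros h [Hh _]. field. apply RtoC_neq0, Hh.
  - replace (locally (f x)) with (locally (f x + 0 * l)%C) by (f_equal; ring).
    apply filterlim_Cplus; [apply _|apply filterlim_const|].
    apply filterlim_Cmult; [apply _| |exact H].
    apply (filterlim_increments_RtoC id). intros eps. exists eps.
    intros h _ Hh. unfold id. rewrite Rminus_0_r. exact Hh.
Qed.

Lemma is_deriv_I11_const c x : is_deriv_I11 (fun _ => c) x (RtoC 0).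
Proof.
  apply (filterlim_within_ext _ (fun _ => RtoC 0)).
  - intros h [Hh _]. field. apply RtoC_neq0, Hh.
  - apply filterlim_const.
Qed.

Lemma is_deriv_I11_plus f g x lf lg :
  is_deriv_I11 f x lf -> is_deriv_I11 g x lg ->
  is_deriv_I11 (fun y => f y + g y)%C x (lf + lg)%C.
Proof.
  intros Hf Hg.
  apply (filterlim_within_ext _
    (fun h => (f (x + h)%R - f x) / RtoC h + (g (x + h)%R - g x) / RtoC h)%C).
  - intros h [Hh _]. field. apply RtoC_neq0, Hh.
  - apply filterlim_Cplus; auto. apply _.
Qed.

Lemma is_deriv_I11_mult f g x lf lg :
  is_deriv_I11 f x lf -> is_deriv_I11 g x lg ->
  is_deriv_I11 (fun y => f y * g y)%C x (lf * g x + f x * lg)%C.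
Proof.
  intros Hf Hg. pose proof (is_deriv_I11_continuous _ _ _ Hg) as Cg.
  apply (filterlim_within_ext _ (fun h => (f (x + h)%R - f x) / RtoC h * g (x + h)%R
                                       + f x * ((g (x + h)%R - g x) / RtoC h))%C).
  - intros h [Hh _]. field. apply RtoC_neq0, Hh.
  - apply filterlim_Cplus; [apply _| |]; apply filterlim_Cmult; auto; try apply _.
    apply filterlim_const.
Qed.

Lemma continuity_pt_increment (M : R -> R) x :
  continuity_pt M x ->
  forall eps : posreal, exists delta : posreal,
    forall h, Rabs h < delta -> Rabs (M (x + h) - M x) < eps.
Proof.
  intros HM eps. destruct (HM eps (cond_pos eps)) as [d [Hd Hb]].
  exists (mkposreal d Hd). intros h Hh. simpl in Hh.
  destruct (Req_dec h 0) as [->|Hn].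
  - rewrite Rplus_0_r, Rminus_diag, Rabs_R0. apply cond_pos.
  - apply (Hb (x + h)). split; [split; [exact I|lra]|].
    simpl; unfold R_dist. replace (x + h - x) with h by ring. exact Hh.
Qed.

(* The chain rule only needs [M] to map [-1,1] injectively into itself, so that
   nonzero admissible increments of [y] give nonzero admissible increments of [M y]. *)
Lemma is_deriv_I11_comp f (M : R -> R) x lf m :
  I11 x ->
  (forall y, I11 y -> I11 (M y)) ->
  (forall y z, I11 y -> I11 z -> M y = M z -> y = z) ->
  derivable_pt_lim M x m -> is_deriv_I11 f (M x) lf ->
  is_deriv_I11 (fun y => f (M y)) x (lf * RtoC m)%C.
Proof.
  intros Hx HM Hinj Hd Hf.
  set (k := fun h => M (x + h) - M x).
  assert (Hk0 : forall h, h <> 0 -> I11 (x + h) -> k h <> 0).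
  { intros h Hh Hxh E. apply Hh.
    enough (x + h = x) by lra. apply Hinj; auto. unfold k in E; lra. }
  assert (Hk : filterlim k (increments x) (increments (M x))).
  { intros P [eps HP].
    assert (HC : continuity_pt M x) by (apply derivable_continuous_pt; exists m; exact Hd).
    destruct (continuity_pt_increment M x HC eps) as [d Hdd].
    exists d. intros h Hh [Hh0 Hxh]. apply HP.
    - apply ball_0_Rabs, Hdd, ball_0_Rabs, Hh.
    - split; [apply Hk0; auto|].
      unfold k. replace (M x + (M (x + h) - M x)) with (M (x + h)) by ring. auto. }
  apply (filterlim_within_ext _
    (fun h => (f (M x + k h)%R - f (M x)) / RtoC (k h) * RtoC (k h / h))%C).
  - intros h [Hh Hxh]. pose proof (Hk0 h Hh Hxh) as Hkh.
    replace (M x + k h) with (M (x + h)) by (unfold k; ring).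
    rewrite RtoC_div by auto. field. split; apply RtoC_neq0; auto.
  - apply filterlim_Cmult; [apply _| |].
    + exact (filterlim_comp _ _ _ k _ _ _ _ Hk Hf).
    + apply filterlim_increments_RtoC. intros eps.
      destruct (Hd eps (cond_pos eps)) as [d Hdd]. exists d. auto.
Qed.

(* Turns a goal [is_deriv_I11 f x l] into [is_deriv_I11 f x ?l'] and [?l' = l]. *)
Ltac deriv_up_to_eq :=
  match goal with |- is_deriv_I11 ?f ?x _ => eapply (eq_ind _ (is_deriv_I11 f x)) end.

(** * Smooth functions on [-1,1] *)

Lemma smooth_of_deriv_closed (P : (R -> C) -> Prop) :
  (forall f, P f -> exists g, P g /\ forall y, I11 y -> is_deriv_I11 f y (g y)) ->
  forall f, P f -> smooth_I11 f.
Proof.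
  intros H f Pf.
  pose (next := fun s : {f | P f} =>
    let e := constructive_indefinite_description _ (H (proj1_sig s) (proj2_sig s)) in
    exist P (proj1_sig e) (proj1 (proj2_sig e))).
  assert (Hnext : forall s y, I11 y -> is_deriv_I11 (proj1_sig s) y (proj1_sig (next s) y)).
  { intros s y Hy. unfold next; simpl.
    destruct (constructive_indefinite_description _ _) as [g [Pg Hg]]. auto. }
  exists (fun n => proj1_sig (Nat.iter n next (exist P f Pf))).
  split; [reflexivity|]. intros n y Hy. apply Hnext, Hy.
Qed.

(* Products are closed under differentiation only up to finite sums (Leibniz rule). *)
Inductive sums (P : (R -> C) -> Prop) : (R -> C) -> Prop :=
  | sums_base f : P f -> sums P f
  | sums_plus f g : sums P f -> sums P g -> sums P (fun y => f y + g y)%C.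

Lemma smooth_sums (P : (R -> C) -> Prop) :
  (forall f, P f -> exists g, sums P g /\ forall y, I11 y -> is_deriv_I11 f y (g y)) ->
  forall f, sums P f -> smooth_I11 f.
Proof.
  intros H. apply (smooth_of_deriv_closed (sums P)).
  intros f Hf. induction Hf as [f Pf|f g _ [f' [Sf Df]] _ [g' [Sg Dg]]]; auto.
  exists (fun y => f' y + g' y)%C. split; [apply sums_plus; auto|].
  intros y Hy. apply is_deriv_I11_plus; auto.
Qed.

Lemma smooth_ext f g : smooth_I11 f -> (forall y, I11 y -> f y = g y) -> smooth_I11 g.
Proof.
  intros [D [H0 H1]] E. exists D. split; auto.
  intros y Hy. rewrite H0, E; auto.
Qed.

Lemma smooth_deriv f :
  smooth_I11 f -> exists g, smooth_I11 g /\ forall y, I11 y -> is_deriv_I11 f y (g y).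
Proof.
  intros [D [H0 H1]]. exists (D 1%nat). split.
  - exists (fun n => D (S n)). split; auto.
  - intros y Hy. apply (is_deriv_I11_ext (D O)); auto.
Qed.

Lemma deriv_tower_unique f g Df Dg : deriv_tower f Df -> deriv_tower g Dg ->
  (forall y, I11 y -> f y = g y) -> forall n y, I11 y -> Df n y = Dg n y.
Proof.
  intros [Hf0 Hf1] [Hg0 Hg1] E n. induction n as [|n IH]; intros y Hy.
  - rewrite Hf0, Hg0; auto.
  - apply (is_deriv_I11_unique (Dg n) y); auto. apply (is_deriv_I11_ext (Df n)); auto.
Qed.

Lemma smooth_const c : smooth_I11 (fun _ => c).
Proof.
  apply (smooth_sums (fun f => exists c, f = fun _ => c)); [|constructor; eauto].
  intros f [c0 ->]. exists (fun _ => RtoC 0). split.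
  - constructor. eauto.
  - intros y _. apply is_deriv_I11_const.
Qed.

Lemma smooth_mult f g : smooth_I11 f -> smooth_I11 g -> smooth_I11 (fun y => f y * g y)%C.
Proof.
  intros Hf Hg.
  apply (smooth_sums (fun h => exists f g, smooth_I11 f /\ smooth_I11 g /\
                                          h = fun y => (f y * g y)%C));
    [|constructor; eauto].
  intros h [f0 [g0 [Hf0 [Hg0 ->]]]].
  destruct (smooth_deriv _ Hf0) as [f' [Hf' Df]].
  destruct (smooth_deriv _ Hg0) as [g' [Hg' Dg]].
  exists (fun y => f' y * g0 y + f0 y * g' y)%C. split.
  - apply sums_plus; apply sums_base; eauto 6.
  - intros y Hy. apply is_deriv_I11_mult; auto.
Qed.

Section Composition.
Variables (M M' : R -> R).
Hypothesis M_I11 : forall y, I11 y -> I11 (M y).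
Hypothesis M_inj : forall y z, I11 y -> I11 z -> M y = M z -> y = z.
Hypothesis M_deriv : forall y, I11 y -> derivable_pt_lim M y (M' y).
Hypothesis M'_smooth : smooth_I11 (fun y => RtoC (M' y)).

Lemma smooth_comp_mult f g :
  smooth_I11 f -> smooth_I11 g -> smooth_I11 (fun y => f (M y) * g y)%C.
Proof.
  intros Hf Hg.
  apply (smooth_sums (fun h => exists f g, smooth_I11 f /\ smooth_I11 g /\
                                          h = fun y => (f (M y) * g y)%C));
    [|constructor; eauto].
  intros h [f0 [g0 [Hf0 [Hg0 ->]]]].
  destruct (smooth_deriv _ Hf0) as [f' [Hf' Df]].
  destruct (smooth_deriv _ Hg0) as [g' [Hg' Dg]].
  exists (fun y => f' (M y) * (RtoC (M' y) * g0 y) + f0 (M y) * g' y)%C. split.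
  - apply sums_plus; apply sums_base; [exists f', (fun y => RtoC (M' y) * g0 y)%C|eauto 6].
    repeat split; auto. apply smooth_mult; auto.
  - intros y Hy.
    replace (f' (M y) * (RtoC (M' y) * g0 y) + f0 (M y) * g' y)%C
      with (f' (M y) * RtoC (M' y) * g0 y + f0 (M y) * g' y)%C by ring.
    apply (is_deriv_I11_mult (fun y => f0 (M y))); auto. apply is_deriv_I11_comp; auto.
Qed.

Lemma smooth_comp f : smooth_I11 f -> smooth_I11 (fun y => f (M y)).
Proof.
  intros Hf. apply (smooth_ext (fun y => f (M y) * RtoC 1)%C).
  - apply smooth_comp_mult, smooth_const. exact Hf.
  - intros y _. apply Cmult_1_r.
Qed.

End Composition.

(** * Complex powers of affine functions *)

Lemma rcpow_0_r x : rcpow x (RtoC 0) = RtoC 1.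
Proof.
  unfold rcpow; simpl. rewrite !Rmult_0_l, exp_0, cos_0, sin_0.
  apply injective_projections; simpl; ring.
Qed.

Lemma rcpow_neq0 x mu : rcpow x mu <> RtoC 0.
Proof.
  intros H. unfold rcpow in H.
  pose proof (f_equal fst H) as Hre. pose proof (f_equal snd H) as Him. simpl in Hre, Him.
  set (e := exp (Re mu * ln x)) in *. set (t := Im mu * ln x) in *.
  assert (0 < e) by apply exp_pos. pose proof (sin2_cos2 t) as Hsc. unfold Rsqr in Hsc.
  assert (cos t = 0) by nra. assert (sin t = 0) by nra. nra.
Qed.

Lemma rcpow_mult_Rinv x mu : 0 < x -> (rcpow x mu * rcpow (/ x) mu)%C = RtoC 1.
Proof.
  intros Hx. unfold rcpow. rewrite ln_Rinv by lra.
  set (L := ln x). replace (Re mu * - L) with (- (Re mu * L)) by ring.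
  replace (Im mu * - L) with (- (Im mu * L)) by ring.
  rewrite exp_Ropp, cos_neg, sin_neg.
  pose proof (sin2_cos2 (Im mu * L)) as Hsc. unfold Rsqr in Hsc.
  assert (exp (Re mu * L) <> 0) by apply Rgt_not_eq, exp_pos.
  apply injective_projections; simpl; field_simplify; try lra; nra.
Qed.

Section AffinePower.
Variables (b s d : R) (mu : C).
Hypothesis d_pos : 0 < d.
Hypothesis affine_pos : forall y, I11 y -> 0 < b + s * y.

Lemma is_deriv_I11_rcpow_affine y : I11 y ->
  is_deriv_I11 (fun y => rcpow ((b + s * y) / d) mu) y
    (mu * RtoC (s / (b + s * y)) * rcpow ((b + s * y) / d) mu)%C.
Proof.
  intros Hy. pose proof (affine_pos y Hy) as Hp.
  destruct mu as [mr mi]. unfold rcpow; simpl Re; simpl Im.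
  set (K := s / (b + s * y)). set (L := fun y => ln ((b + s * y) / d)).
  assert (DL : forall c, derivable_pt_lim (fun y => c * L y) y (c * K)).
  { intros c. apply is_derive_Reals. unfold L. auto_derive.
    - apply Rdiv_lt_0_compat; lra.
    - unfold K. field. lra. }
  assert (De := derivable_pt_lim_comp _ exp _ _ _ (DL mr) (derivable_pt_lim_exp _)).
  assert (Dc := derivable_pt_lim_comp _ cos _ _ _ (DL mi) (derivable_pt_lim_cos _)).
  assert (Ds := derivable_pt_lim_comp _ sin _ _ _ (DL mi) (derivable_pt_lim_sin _)).
  unfold comp, L in De, Dc, Ds.
  deriv_up_to_eq.
  - apply is_deriv_I11_mult; [apply (is_deriv_I11_RtoC _ _ _ De)|].
    apply is_deriv_I11_plus; [apply (is_deriv_I11_RtoC _ _ _ Dc)|].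
    apply is_deriv_I11_mult; [apply is_deriv_I11_const|apply (is_deriv_I11_RtoC _ _ _ Ds)].
  - apply injective_projections; simpl; ring.
Qed.

Lemma derivable_pt_lim_inv_pow_affine k y : I11 y ->
  derivable_pt_lim (fun y => / (b + s * y) ^ k) y
    (- INR k * s * (/ (b + s * y) ^ k * / (b + s * y))).
Proof.
  intros Hy. pose proof (affine_pos y Hy) as Hp. apply is_derive_Reals. auto_derive.
  - apply pow_nonzero. lra.
  - destruct k as [|k]; simpl; [field; lra|].
    field. split; [lra|apply pow_nonzero; lra].
Qed.

Lemma smooth_inv_pow_rcpow_affine c k :
  smooth_I11 (fun y => c * RtoC (/ (b + s * y) ^ k) * rcpow ((b + s * y) / d) mu)%C.
Proof.
  apply (smooth_of_deriv_closed (fun f => exists c k,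
    f = fun y => (c * RtoC (/ (b + s * y) ^ k) * rcpow ((b + s * y) / d) mu)%C));
    [|eauto].
  intros f [c0 [k0 ->]].
  exists (fun y => c0 * RtoC s * (mu - RtoC (INR k0))
                   * RtoC (/ (b + s * y) ^ S k0) * rcpow ((b + s * y) / d) mu)%C.
  split; [eauto|]. intros y Hy. pose proof (affine_pos y Hy) as Hp.
  deriv_up_to_eq.
  - apply is_deriv_I11_mult; [|apply is_deriv_I11_rcpow_affine, Hy].
    apply is_deriv_I11_mult; [apply is_deriv_I11_const|].
    apply is_deriv_I11_RtoC, derivable_pt_lim_inv_pow_affine, Hy.
  - replace (/ (b + s * y) ^ S k0) with (/ (b + s * y) ^ k0 * / (b + s * y))
      by (simpl; field; split; [apply pow_nonzero|]; lra).
    unfold Rdiv. set (q := / (b + s * y) ^ k0). set (r := / (b + s * y)).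
    set (G := rcpow ((b + s * y) * / d) mu).
    destruct c0, mu, G. apply injective_projections; simpl; ring.
Qed.

End AffinePower.

(** * The Lorentz map *)

Section Lorentz.
Variable alpha : R.
Hypothesis alpha_pos : 0 < alpha.

Definition root1a := sqrt (1 + alpha).
Definition roota := sqrt alpha.

Lemma root1a_sq : root1a * root1a = 1 + alpha.
Proof. apply sqrt_sqrt. lra. Qed.

Lemma roota_pos : 0 < roota.
Proof. apply sqrt_lt_R0, alpha_pos. Qed.

Lemma root1a_gt1 : 1 < root1a.
Proof. rewrite <- sqrt_1. apply sqrt_lt_1; lra. Qed.

Lemma sqrt_1_minus_gam_sq : sqrt (1 - gam alpha * gam alpha) = roota / root1a.
Proof.
  pose proof root1a_gt1. pose proof roota_pos. pose proof root1a_sq.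
  assert (Hs2 : roota * roota = alpha) by (apply sqrt_sqrt; lra).
  replace (1 - gam alpha * gam alpha) with (roota / root1a * (roota / root1a)).
  - apply sqrt_square, Rlt_le, Rdiv_lt_0_compat; lra.
  - unfold gam. fold root1a.
    replace (roota / root1a * (roota / root1a)) with (roota * roota / (root1a * root1a))
      by (field; lra).
    rewrite Hs2. set (b := root1a) in *. clearbody b. replace alpha with (b * b - 1) by lra.
    field. lra.
Qed.

Definition lorentz y := (root1a * y - 1) / (root1a - y).
Definition lorentz_inv y := (root1a * y + 1) / (root1a + y).
Definition dlorentz y := alpha * / (root1a - y) ^ 2.
Definition dlorentz_inv y := alpha * / (root1a + y) ^ 2.

Lemma lorentz_I11 y : I11 y -> I11 (lorentz y).
Proof.
  intros [H1 H2]. pose proof root1a_gt1.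
  assert (E : lorentz y * (root1a - y) = root1a * y - 1) by (unfold lorentz; field; lra).
  generalize (lorentz y) E. intros t Et.
  assert ((t + 1) * (root1a - y) = (root1a - 1) * (y + 1)) by nra.
  assert ((1 - t) * (root1a - y) = (root1a + 1) * (1 - y)) by nra.
  split; nra.
Qed.

Lemma lorentz_inv_opp y : I11 y -> lorentz_inv y = - lorentz (- y).
Proof. intros [H1 H2]. pose proof root1a_gt1. unfold lorentz_inv, lorentz. field. lra. Qed.

Lemma lorentz_inv_I11 y : I11 y -> I11 (lorentz_inv y).
Proof.
  intros Hy. rewrite lorentz_inv_opp by exact Hy.
  assert (Hy' : I11 (- y)) by (destruct Hy; split; lra).
  destruct (lorentz_I11 _ Hy'). split; lra.
Qed.

Lemma lorentz_inv_lorentz y : I11 y -> lorentz_inv (lorentz y) = y.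
Proof.
  intros [H1 H2]. pose proof root1a_gt1. pose proof root1a_sq.
  unfold lorentz, lorentz_inv. field. repeat split; intro; nra.
Qed.

Lemma lorentz_lorentz_inv y : I11 y -> lorentz (lorentz_inv y) = y.
Proof.
  intros [H1 H2]. pose proof root1a_gt1. pose proof root1a_sq.
  unfold lorentz, lorentz_inv. field. repeat split; intro; nra.
Qed.

Lemma lorentz_inj y z : I11 y -> I11 z -> lorentz y = lorentz z -> y = z.
Proof. intros Hy Hz E. rewrite <- (lorentz_inv_lorentz y), E; auto using lorentz_inv_lorentz. Qed.

Lemma lorentz_inv_inj y z : I11 y -> I11 z -> lorentz_inv y = lorentz_inv z -> y = z.
Proof. intros Hy Hz E. rewrite <- (lorentz_lorentz_inv y), E; auto using lorentz_lorentz_inv. Qed.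

Lemma derivable_pt_lim_lorentz y : I11 y -> derivable_pt_lim lorentz y (dlorentz y).
Proof.
  intros [H1 H2]. pose proof root1a_gt1. pose proof root1a_sq. apply is_derive_Reals.
  unfold lorentz, dlorentz. auto_derive; [lra|].
  replace alpha with (root1a * root1a - 1) by lra. field. lra.
Qed.

Lemma derivable_pt_lim_lorentz_inv y : I11 y -> derivable_pt_lim lorentz_inv y (dlorentz_inv y).
Proof.
  intros [H1 H2]. pose proof root1a_gt1. pose proof root1a_sq. apply is_derive_Reals.
  unfold lorentz_inv, dlorentz_inv. auto_derive; [lra|].
  replace alpha with (root1a * root1a - 1) by lra. field. lra.
Qed.

Lemma dlorentz_pos y : I11 y -> 0 < dlorentz y.
Proof.
  intros [H1 H2]. pose proof root1a_gt1. unfold dlorentz.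
  apply Rmult_lt_0_compat, Rinv_0_lt_compat, pow_lt; lra.
Qed.

Lemma root1a_minus_pos y : I11 y -> 0 < root1a + -1 * y.
Proof. intros [H1 H2]. pose proof root1a_gt1. lra. Qed.

Lemma root1a_plus_pos y : I11 y -> 0 < root1a + 1 * y.
Proof. intros [H1 H2]. pose proof root1a_gt1. lra. Qed.

(* The real rational functions below are the case [mu = 0] of
   [smooth_inv_pow_rcpow_affine]. *)
Lemma smooth_dlorentz : smooth_I11 (fun y => RtoC (dlorentz y)).
Proof.
  eapply smooth_ext.
  - apply (smooth_inv_pow_rcpow_affine root1a (-1) 1 (RtoC 0) Rlt_0_1 root1a_minus_pos
             (RtoC alpha) 2).
  - intros y _. cbv beta. rewrite rcpow_0_r, Cmult_1_r, <- RtoC_mult.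
    unfold dlorentz. do 3 f_equal. ring.
Qed.

Lemma smooth_dlorentz_inv : smooth_I11 (fun y => RtoC (dlorentz_inv y)).
Proof.
  eapply smooth_ext.
  - apply (smooth_inv_pow_rcpow_affine root1a 1 1 (RtoC 0) Rlt_0_1 root1a_plus_pos
             (RtoC alpha) 2).
  - intros y _. cbv beta. rewrite rcpow_0_r, Cmult_1_r, <- RtoC_mult.
    unfold dlorentz_inv. do 3 f_equal. ring.
Qed.

End Lorentz.

(** * The transform of a solution *)

Section Transform.
Variables (alpha : R) (lam : C).
Hypothesis alpha_pos : 0 < alpha.

Local Notation a := (root1a alpha).
Local Notation T := (lorentz alpha).
Local Notation T' := (dlorentz alpha).

Definition weight y := rcpow ((a - y) / roota alpha) (- lam).
Definition weight_inv y := rcpow ((a + y) / roota alpha) (- lam).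

Lemma transf_eq phi y : I11 y -> transf alpha lam phi y = (weight y * phi (T y))%C.
Proof.
  intros [Hy1 Hy2]. pose proof (root1a_gt1 alpha alpha_pos) as Ha.
  pose proof (roota_pos alpha alpha_pos) as Hs.
  unfold transf, weight, lorentz. rewrite sqrt_1_minus_gam_sq by exact alpha_pos.
  unfold gam. fold (root1a alpha). f_equal; f_equal; field; lra.
Qed.

Lemma weight_mult_weight_inv y : I11 y -> (weight y * weight_inv (T y))%C = RtoC 1.
Proof.
  intros [Hy1 Hy2]. pose proof (root1a_gt1 alpha alpha_pos) as Ha.
  pose proof (roota_pos alpha alpha_pos) as Hs. pose proof (root1a_sq alpha alpha_pos) as Ha2.
  assert (Hs2 : roota alpha * roota alpha = alpha) by (apply sqrt_sqrt; lra).
  unfold weight, weight_inv.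
  replace ((a - y) / roota alpha) with (/ (roota alpha / (a - y))) by (field; lra).
  replace ((a + T y) / roota alpha) with (roota alpha / (a - y)).
  - rewrite Cmult_comm. apply rcpow_mult_Rinv, Rdiv_lt_0_compat; lra.
  - unfold lorentz. apply (Rmult_eq_reg_r (roota alpha * (a - y))); [|nra].
    field_simplify; lra.
Qed.

Lemma smooth_weight : smooth_I11 weight.
Proof.
  eapply smooth_ext.
  - apply (smooth_inv_pow_rcpow_affine a (-1) _ (- lam) (roota_pos alpha alpha_pos)
             (root1a_minus_pos alpha alpha_pos) (RtoC 1) 0).
  - intros y _. cbv beta. rewrite pow_O, Rinv_1, !Cmult_1_l.
    unfold weight. do 2 f_equal. ring.
Qed.

Lemma smooth_weight_inv : smooth_I11 weight_inv.
Proof.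
  eapply smooth_ext.
  - apply (smooth_inv_pow_rcpow_affine a 1 _ (- lam) (roota_pos alpha alpha_pos)
             (root1a_plus_pos alpha alpha_pos) (RtoC 1) 0).
  - intros y _. cbv beta. rewrite pow_O, Rinv_1, !Cmult_1_l.
    unfold weight_inv. do 2 f_equal. ring.
Qed.

Lemma is_deriv_I11_weight y : I11 y ->
  is_deriv_I11 weight y (lam * RtoC (/ (a - y)) * weight y)%C.
Proof.
  intros Hy. pose proof (root1a_minus_pos alpha alpha_pos y Hy).
  assert (E : forall z, rcpow ((a + -1 * z) / roota alpha) (- lam) = weight z)
    by (intros z; unfold weight; do 2 f_equal; ring).
  apply (is_deriv_I11_ext (fun z => rcpow ((a + -1 * z) / roota alpha) (- lam)));
    [intros; apply E|exact Hy|].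
  rewrite <- E. deriv_up_to_eq.
  - apply (is_deriv_I11_rcpow_affine a (-1) _ (- lam) (roota_pos alpha alpha_pos)
             (root1a_minus_pos alpha alpha_pos) y Hy).
  - replace (-1 / (a + -1 * y)) with (- / (a - y)) by (field; lra).
    rewrite RtoC_opp. ring.
Qed.

Lemma smooth_transf phi : smooth_I11 phi -> smooth_I11 (transf alpha lam phi).
Proof.
  intros Hphi. apply (smooth_ext (fun y => weight y * phi (T y))%C).
  - apply smooth_mult; [apply smooth_weight|].
    apply (smooth_comp T T' (lorentz_I11 alpha alpha_pos) (lorentz_inj alpha alpha_pos)
             (derivable_pt_lim_lorentz alpha alpha_pos) (smooth_dlorentz alpha alpha_pos) _ Hphi).
  - intros y Hy. symmetry. apply transf_eq, Hy.
Qed.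

Definition op_E1 (D : nat -> R -> C) y :=
  ((lam * lam + lam) * D O y
   + (RtoC 2 * lam + RtoC 2) * RtoC y * D 1%nat y
   + RtoC (2 * alpha / (sqrt (1 + alpha) + y)) * D 1%nat y
   + RtoC (y * y - 1) * D 2%nat y)%C.

Definition op_E2 (D : nat -> R -> C) y :=
  ((lam * lam - lam) * D O y
   + (RtoC 2 * lam * RtoC y + RtoC (2 * sqrt (1 + alpha))) * D 1%nat y
   + RtoC (y * y - 1) * D 2%nat y)%C.

Definition transf_d1 (D : nat -> R -> C) y :=
  (weight y * (lam * RtoC (/ (a - y)) * D O (T y) + RtoC (T' y) * D 1%nat (T y)))%C.

Definition transf_d2 (D : nat -> R -> C) y :=
  let r := / (a - y) in
  (weight y * ((lam * lam + lam) * RtoC (r * r) * D O (T y)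
               + (RtoC 2 * lam * RtoC (r * T' y) + RtoC (2 * alpha * r ^ 3)) * D 1%nat (T y)
               + RtoC (T' y * T' y) * D 2%nat (T y)))%C.

Section Tower.
Variables (phi : R -> C) (D Dp : nat -> R -> C).
Hypothesis D_tower : deriv_tower phi D.
Hypothesis Dp_tower : deriv_tower (transf alpha lam phi) Dp.

Lemma is_deriv_I11_tower_lorentz n y : I11 y ->
  is_deriv_I11 (fun z => D n (T z)) y (D (S n) (T y) * RtoC (T' y))%C.
Proof.
  intros Hy.
  apply (is_deriv_I11_comp (D n) T y _ _ Hy (lorentz_I11 alpha alpha_pos)
           (lorentz_inj alpha alpha_pos) (derivable_pt_lim_lorentz alpha alpha_pos y Hy)).
  apply (proj2 D_tower), lorentz_I11; auto.
Qed.

Lemma transf_tower_1 y : I11 y -> Dp 1%nat y = transf_d1 D y.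
Proof.
  intros Hy. destruct D_tower as [D0 _]. destruct Dp_tower as [Dp0 Dp1].
  apply (is_deriv_I11_unique (Dp O) y); auto.
  apply (is_deriv_I11_ext (fun z => weight z * D O (T z))%C);
    [intros z Hz; rewrite Dp0, transf_eq, D0; auto using lorentz_I11|exact Hy|].
  deriv_up_to_eq.
  - apply is_deriv_I11_mult; [apply is_deriv_I11_weight, Hy|].
    apply is_deriv_I11_tower_lorentz, Hy.
  - unfold transf_d1. ring.
Qed.

Lemma is_deriv_I11_transf_d1 y : I11 y -> is_deriv_I11 (transf_d1 D) y (transf_d2 D y).
Proof.
  intros Hy. pose proof Hy as [Hy1 Hy2].
  pose proof (root1a_gt1 alpha alpha_pos) as Ha.
  assert (Dr : derivable_pt_lim (fun z => / (a - z)) y (/ (a - y) * / (a - y))).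
  { apply is_derive_Reals. auto_derive; [lra|]. field. lra. }
  assert (DT' : derivable_pt_lim T' y (2 * alpha * / (a - y) ^ 3)).
  { apply is_derive_Reals. unfold dlorentz. auto_derive.
    - assert (0 < a - y) by lra. intro; nra.
    - field. lra. }
  deriv_up_to_eq.
  - apply is_deriv_I11_mult; [apply is_deriv_I11_weight, Hy|].
    apply is_deriv_I11_plus.
    + apply is_deriv_I11_mult; [|apply is_deriv_I11_tower_lorentz, Hy].
      apply is_deriv_I11_mult; [apply is_deriv_I11_const|apply is_deriv_I11_RtoC, Dr].
    + apply is_deriv_I11_mult; [apply is_deriv_I11_RtoC, DT'|].
      apply is_deriv_I11_tower_lorentz, Hy.
  - unfold transf_d2. rewrite !RtoC_mult, !RtoC_pow.
    replace (/ (a - y) ^ 3) with (/ (a - y) * / (a - y) * / (a - y))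
      by (field; lra).
    rewrite !RtoC_mult, RtoC_inv by lra. simpl. ring.
Qed.

Lemma transf_tower_2 y : I11 y -> Dp 2%nat y = transf_d2 D y.
Proof.
  intros Hy. apply (is_deriv_I11_unique (Dp 1%nat) y); [exact Hy|apply Dp_tower, Hy|].
  apply (is_deriv_I11_ext (transf_d1 D)); auto.
  - intros z Hz. symmetry. apply transf_tower_1, Hz.
  - apply is_deriv_I11_transf_d1, Hy.
Qed.

Lemma op_E2_transf y : I11 y ->
  op_E2 Dp y = (weight y * RtoC (T' y) * op_E1 D (T y))%C.
Proof.
  intros Hy. pose proof Hy as [Hy1 Hy2].
  pose proof (root1a_gt1 alpha alpha_pos) as Ha.
  pose proof (root1a_sq alpha alpha_pos) as Ha2.
  unfold op_E2, op_E1.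
  rewrite transf_tower_1, transf_tower_2, (proj1 Dp_tower), transf_eq,
    <- (proj1 D_tower (T y)) by auto using lorentz_I11.
  unfold transf_d1, transf_d2, dlorentz, lorentz. fold (root1a alpha).
  set (A := a) in *. clearbody A. replace alpha with (A * A - 1) by lra.
  destruct lam as [l1 l2], (weight y) as [w1 w2].
  destruct (D O ((A * y - 1) / (A - y))) as [p1 q1].
  destruct (D 1%nat ((A * y - 1) / (A - y))) as [p2 q2].
  destruct (D 2%nat ((A * y - 1) / (A - y))) as [p3 q3].
  apply injective_projections; simpl; field; repeat split; intro; nra.
Qed.

End Tower.

End Transform.

Section Solutions.
Variables (alpha : R) (lam : C).
Hypothesis alpha_pos : 0 < alpha.

Lemma solves_E2_transf phi :
  solves_E1 alpha lam phi -> solves_E2 alpha lam (transf alpha lam phi).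
Proof.
  intros [D [HD HE]].
  destruct (smooth_transf alpha lam alpha_pos phi (ex_intro _ D HD)) as [Dp HDp].
  exists Dp. split; [exact HDp|]. intros y Hy.
  change (op_E2 alpha lam Dp y = RtoC 0).
  assert (HE1 : op_E1 alpha lam D (lorentz alpha y) = RtoC 0)
    by (apply HE, lorentz_I11; assumption).
  rewrite (op_E2_transf alpha lam alpha_pos phi D Dp HD HDp y Hy), HE1. ring.
Qed.

Lemma solves_E1_of_solves_E2 psi : solves_E2 alpha lam psi ->
  exists phi, solves_E1 alpha lam phi /\
    forall y, I11 y -> psi y = transf alpha lam phi y.
Proof.
  intros [Dq [HDq HE]].
  set (phi := fun y => (weight_inv alpha lam y * psi (lorentz_inv alpha y))%C).
  assert (Hpsi : forall y, I11 y -> psi y = transf alpha lam phi y).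
  { intros y Hy. rewrite transf_eq by auto. unfold phi.
    rewrite lorentz_inv_lorentz, Cmult_assoc, weight_mult_weight_inv by auto. ring. }
  assert (Hphi : smooth_I11 phi).
  { apply smooth_mult; [apply smooth_weight_inv, alpha_pos|].
    apply (smooth_comp _ _ (lorentz_inv_I11 alpha alpha_pos) (lorentz_inv_inj alpha alpha_pos)
             (derivable_pt_lim_lorentz_inv alpha alpha_pos) (smooth_dlorentz_inv alpha alpha_pos)).
    exists Dq. exact HDq. }
  destruct Hphi as [D HD].
  destruct (smooth_transf alpha lam alpha_pos phi (ex_intro _ D HD)) as [Dp HDp].
  exists phi. split; [|exact Hpsi]. exists D. split; [exact HD|].
  intros x Hx. change (op_E1 alpha lam D x = RtoC 0).
  set (y := lorentz_inv alpha x).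
  assert (Hy : I11 y) by (apply lorentz_inv_I11; assumption).
  assert (Hw : weight alpha lam y <> RtoC 0) by apply rcpow_neq0.
  assert (HT' : RtoC (dlorentz alpha y) <> RtoC 0)
    by (apply RtoC_neq0, Rgt_not_eq, dlorentz_pos; assumption).
  assert (E : (weight alpha lam y * RtoC (dlorentz alpha y) * op_E1 alpha lam D x)%C = RtoC 0).
  { rewrite <- (lorentz_lorentz_inv alpha alpha_pos x Hx). fold y.
    rewrite <- (op_E2_transf alpha lam alpha_pos phi D Dp HD HDp y Hy).
    unfold op_E2.
    rewrite !(deriv_tower_unique _ _ _ _ HDp HDq (fun z Hz => eq_sym (Hpsi z Hz))) by exact Hy.
    apply HE, Hy. }
  replace (op_E1 alpha lam D x)
    with (/ (weight alpha lam y * RtoC (dlorentz alpha y))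
          * (weight alpha lam y * RtoC (dlorentz alpha y) * op_E1 alpha lam D x))%C
    by (field; split; assumption).
  rewrite E. ring.
Qed.

Lemma nontrivial_transf phi :
  nontrivial_I11 phi -> nontrivial_I11 (transf alpha lam phi).
Proof.
  intros [y [Hy Hnz]]. exists (lorentz_inv alpha y). split; [apply lorentz_inv_I11; auto|].
  rewrite transf_eq, lorentz_lorentz_inv by auto using lorentz_inv_I11.
  apply Cmult_neq_0; [apply rcpow_neq0|exact Hnz].
Qed.

Lemma nontrivial_of_transf phi psi :
  (forall y, I11 y -> psi y = transf alpha lam phi y) ->
  nontrivial_I11 psi -> nontrivial_I11 phi.
Proof.
  intros Hpsi [y [Hy Hnz]]. exists (lorentz alpha y). split; [apply lorentz_I11; auto|].
  intros H. apply Hnz. rewrite Hpsi, transf_eq, H by assumption. ring.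
Qed.

End Solutions.

Theorem mainTheorem4 (alpha : R) (lam : C) (Halpha : (0 < alpha)%R) :
  ((exists phi, solves_E1 alpha lam phi /\ nontrivial_I11 phi) <->
   (exists psi, solves_E2 alpha lam psi /\ nontrivial_I11 psi))
  /\ (forall phi, solves_E1 alpha lam phi -> solves_E2 alpha lam (transf alpha lam phi))
  /\ (forall psi, solves_E2 alpha lam psi ->
        exists phi, solves_E1 alpha lam phi /\
          forall y', I11 y' -> psi y' = transf alpha lam phi y').
Proof.
  split; [split|split].
  - intros [phi [Hphi Hnz]]. exists (transf alpha lam phi).
    split; [apply solves_E2_transf|apply nontrivial_transf]; assumption.
  - intros [psi [Hpsi Hnz]].
    destruct (solves_E1_of_solves_E2 alpha lam Halpha psi Hpsi) as [phi [Hphi Heq]].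
    exists phi. split; [exact Hphi|]. exact (nontrivial_of_transf alpha lam Halpha phi psi Heq Hnz).
  - apply solves_E2_transf, Halpha.
  - apply solves_E1_of_solves_E2, Halpha.
Qed.
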